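(* Let $R$ be a commutative unital ring, $G$ a group and $(\mathcal B_1,\Phi_1)\subseteq(\mathcal B_2,\Phi_2)$ a partial subaction of $G$ on generalized Boolean algebras; let $A_k=\mathrm{Lc}(R,\mathcal B_k)\rtimes_{\Phi_k}G$ with $A_1\subseteq A_2$. Suppose $\mathcal B_1$ is an ideal of $\mathcal B_2$ and $A_1$ is contained in no proper two-sided ideal of $A_2$. Then for every $U\in\mathcal B_2$ there exist an index set $I$, elements $U_i\in\mathcal B_1$ ($i\in I$) and a surjective left $A_2$-module homomorphism $\bigoplus_{i\in I}A_2(U_i\delta_e)\to A_2(U\delta_e)$.
   Context: A generalized Boolean algebra is a distributive relatively complemented lattice with least element $0$; an ideal is a subset closed under finite joins and under meets with arbitrary elements. A partial action $\Phi$ of $G$ on $\mathcal B$: ideals $\mathcal I_t$ and isomorphisms $\phi_t:\mathcal I_{t^{-1}}\to\mathcal I_t$ with $\mathcal I_e=\mathcal B$, $\phi_e=\mathrm{id}$, $\phi_s(\mathcal I_{s^{-1}}\cap\mathcal I_t)=\mathcal I_s\cap\mathcal I_{st}$, $\phi_s\phi_t=\phi_{st}$ where defined. A partial subaction: $\mathcal B_1\subseteq\mathcal B_2$ sub generalized Boolean algebra, $\mathcal I_{1,t}\subseteq\mathcal I_{2,t}$, $\phi_{2,t}$ restricting to $\phi_{1,t}$. $\mathrm{Lc}(R,\mathcal B)$ is the algebra of locally constant compactly supported $R$-valued functions on the Stone space of $\mathcal B$, spanned by idempotents $1_U$; $\mathrm{Lc}(R,\mathcal B)\rtimes_\Phi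 G=\bigoplus_g\mathrm{Lc}(R,\mathcal I_g)\delta_g$ with $U\delta_g:=1_U\delta_g$ and $(U\delta_g)(V\delta_h)=\phi_g(\phi_{g^{-1}}(U)\cap V)\delta_{gh}$. $A_1$ is identified with the $R$-span of $\{U\delta_g:U\in\mathcal I_{1,g}\}$ in $A_2$. *)

From HB Require Import structures.
From mathcomp Require Import all_boot all_order all_algebra.
From mathcomp Require Import boolp.
From Stdlib Require List.

Set Implicit Arguments.
Unset Strict Implicit.
Unset Printing Implicit Defensive.

Import Order.TTheory GRing.Theory.
Local Open Scope ring_scope.

(* Generalized Boolean algebras are MathComp's [cbDistrLatticeType]s
   (distributive lattices with bottom and relative complement [Order.diff]). *)

Section GBA.
Variables (d : Order.disp_t) (B : cbDistrLatticeType d).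

Definition is_sub_gba (C : B -> Prop) : Prop :=
  [/\ C Order.bottom,
      forall U V, C U -> C V -> C (Order.meet U V),
      forall U V, C U -> C V -> C (Order.join U V) &
      forall U V, C U -> C V -> C (Order.diff U V)].

Definition is_gba_ideal (C J : B -> Prop) : Prop :=
  [/\ forall U, J U -> C U,
      J Order.bottom,
      forall U V, J U -> J V -> J (Order.join U V) &
      forall U V, J U -> C V -> J (Order.meet U V)].

Definition is_gba_iso (Dom Cod : B -> Prop) (f : B -> B) : Prop :=
  [/\ forall U, Dom U -> Cod (f U),
      forall V, Cod V -> exists2 U, Dom U & f U = V,
      forall U V, Dom U -> Dom V -> f U = f V -> U = V,
      forall U V, Dom U -> Dom V -> f (Order.meet U V) = Order.meet (f U) (f V) &
      forall U V, Dom U -> Dom V -> f (Order.join U V) = Order.join (f U) (f V)].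

Variables (G : Type) (mul : G -> G -> G) (inv : G -> G) (e : G).

Definition is_group : Prop :=
  [/\ forall x y z, mul x (mul y z) = mul (mul x y) z,
      forall x, mul e x = x,
      forall x, mul x e = x,
      forall x, mul (inv x) x = e &
      forall x, mul x (inv x) = e].

Definition is_partial_action (C : B -> Prop) (I : G -> B -> Prop)
    (phi : G -> B -> B) : Prop :=
  [/\ forall t, is_gba_ideal C (I t),
      (forall U, I e U <-> C U) /\ (forall U, C U -> phi e U = U),
      forall t, is_gba_iso (I (inv t)) (I t) (phi t),
      (* phi_s (I_{s^-1} cap I_t) = I_s cap I_{st} *)
      forall s t V, (I s V /\ I (mul s t) V) <->
                    (exists U, [/\ I (inv s) U, I t U & phi s U = V]) &
      forall s t U, I (inv t) U -> I (inv s) (phi t U) ->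
                    phi s (phi t U) = phi (mul s t) U].

Definition is_partial_subaction (C1 : B -> Prop) (I1 : G -> B -> Prop)
    (phi1 : G -> B -> B) (C2 : B -> Prop) (I2 : G -> B -> Prop)
    (phi2 : G -> B -> B) : Prop :=
  [/\ (forall U, C1 U -> C2 U) /\ is_sub_gba C1,
      is_partial_action C1 I1 phi1,
      is_partial_action C2 I2 phi2,
      forall t U, I1 t U -> I2 t U &
      forall t U, I1 (inv t) U -> phi1 t U = phi2 t U].

(* Points of the Stone space of B: nonzero lattice homomorphisms B -> bool
   (equivalently, ultrafilters of B); 1_U is evaluated at xi as xi U. *)
Definition stone_point (xi : B -> bool) : Prop :=
  [/\ forall U V, xi (Order.meet U V) = xi U && xi V,
      forall U V, xi (Order.join U V) = xi U || xi V,
      xi Order.bottom = false &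
      exists U, xi U].

(* The crossed product Lc(R,B) x_Phi G of the partial action (I, phi).
   An element is presented as a finite formal R-combination
   sum_k r_k U_k delta_{g_k} with U_k in I_{g_k}; it denotes the finitely
   supported function g |-> sum_{g_k = g} r_k 1_{U_k} in
   (+)_g Lc(R, I_g) delta_g, functions being on the Stone space of B.
   Two presentations are equal in the algebra iff their denotations agree
   ([cp_eq]).  Multiplication is the bilinear extension of
   (U delta_g)(V delta_h) = phi_g(phi_{g^-1}(U) cap V) delta_{gh}. *)
Variables (R : comPzRingType) (I : G -> B -> Prop) (phi : G -> B -> B).

Definition cterm := (R * B * G)%type.
Definition cpelt := seq cterm.

Definition cp_wf (x : cpelt) : Prop := forall t, List.In t x -> I t.2 t.1.2.

Definition cp_eval (x : cpelt) (h : G) (xi : B -> bool) : R :=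
  \sum_(t <- x) (if `[< t.2 = h >] then t.1.1 * (xi t.1.2)%:R else 0).

Definition cp_eq (x y : cpelt) : Prop :=
  forall h xi, stone_point xi -> cp_eval x h xi = cp_eval y h xi.

Definition cp_add (x y : cpelt) : cpelt := x ++ y.
Definition cp_zero : cpelt := [::].
Definition cp_scale (r : R) (x : cpelt) : cpelt :=
  [seq (r * t.1.1, t.1.2, t.2) | t <- x].

Definition cp_mul_term (t u : cterm) : cterm :=
  (t.1.1 * u.1.1, phi t.2 (Order.meet (phi (inv t.2) t.1.2) u.1.2), mul t.2 u.2).

Definition cp_mul (x y : cpelt) : cpelt := [seq cp_mul_term t u | t <- x, u <- y].

Definition delta (U : B) (g : G) : cpelt := [:: (1, U, g)].

Definition cp_two_sided_ideal (J : cpelt -> Prop) : Prop :=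
  [/\ (forall x, J x -> cp_wf x) /\
        (forall x y, J x -> cp_wf y -> cp_eq x y -> J y),
      J cp_zero,
      forall x y, J x -> J y -> J (cp_add x y),
      forall r x, J x -> J (cp_scale r x) &
      forall a x, cp_wf a -> J x -> J (cp_mul a x) /\ J (cp_mul x a)].

Definition cp_in_left_ideal (U : B) (x : cpelt) : Prop :=
  cp_wf x /\ exists2 a, cp_wf a & cp_eq x (cp_mul a (delta U e)).

Definition cp_dsum (J : Type) (Ui : J -> B) (y : J -> cpelt) : Prop :=
  (forall i, cp_in_left_ideal (Ui i) (y i)) /\
  exists s : seq J, forall i, ~ List.In i s -> cp_eq (y i) cp_zero.

Definition cp_surj_module_hom (J : Type) (Ui : J -> B) (U : B)
    (F : (J -> cpelt) -> cpelt) : Prop :=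
  [/\ forall y, cp_dsum Ui y -> cp_in_left_ideal U (F y),
      forall y y', cp_dsum Ui y -> cp_dsum Ui y' ->
        (forall i, cp_eq (y i) (y' i)) -> cp_eq (F y) (F y'),
      forall y y', cp_dsum Ui y -> cp_dsum Ui y' ->
        cp_eq (F (fun i => cp_add (y i) (y' i))) (cp_add (F y) (F y')),
      forall a y, cp_wf a -> cp_dsum Ui y ->
        cp_eq (F (fun i => cp_mul a (y i))) (cp_mul a (F y)) &
      forall x, cp_in_left_ideal U x -> exists2 y, cp_dsum Ui y & cp_eq (F y) x].

End GBA.

From HB Require Import structures.
From mathcomp Require Import all_boot all_order all_algebra.
From mathcomp Require Import boolp.
From Stdlib Require List.

(* Since A_1 lies in no proper two-sided ideal of A_2, the ideal generated by
   the idempotents V delta_e with V in B_1 is everything: it contains each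
   generator V delta_g of A_1, because V delta_g = (V delta_e)(V delta_e)(V delta_g).
   In particular U delta_e = sum_k a_k (U_k delta_e) b_k for finitely many
   U_k in B_1, and (y_k)_k |-> sum_k y_k b_k (U delta_e) is a left A_2-module map
   onto A_2 (U delta_e): since U delta_e is idempotent, a (U delta_e) is the
   image of (a a_k (U_k delta_e))_k. *)

Set Implicit Arguments.
Unset Strict Implicit.
Unset Printing Implicit Defensive.
Import Order.TTheory GRing.Theory.

Lemma eq_big_In (R : Type) (idx : R) (op : R -> R -> R) (T : Type) (s : seq T)
    (F1 F2 : T -> R) :
  (forall t, List.In t s -> F1 t = F2 t) ->
  \big[op/idx]_(t <- s) F1 t = \big[op/idx]_(t <- s) F2 t.
Proof.
elim: s => [|a s IHs] eqF; first by rewrite !big_nil.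
rewrite !big_cons eqF /=; last by left.
by rewrite IHs // => t st; apply: eqF; right.
Qed.

Lemma In_nth (T : Type) (x0 : T) (s : seq T) k :
  (k < size s)%N -> List.In (nth x0 s k) s.
Proof. by elim: s k => [|a s IHs] [|k] //= ltks; [left | right; apply: IHs]. Qed.

Lemma In_mem (T : eqType) (x : T) (s : seq T) : x \in s -> List.In x s.
Proof.
by elim: s => [|a s IHs] //; rewrite inE => /orP[/eqP-> | /IHs]; [left | right].
Qed.

Section Group.
Variables (G : Type) (mul : G -> G -> G) (inv : G -> G) (e : G).
Hypothesis groupG : is_group mul inv e.

Lemma grp_mulA x y z : mul x (mul y z) = mul (mul x y) z.
Proof. by case: groupG. Qed.
Lemma grp_mul1g x : mul e x = x.
Proof. by case: groupG. Qed.
Lemma grp_mulg1 x : mul x e = x.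
Proof. by case: groupG. Qed.
Lemma grp_mulVg x : mul (inv x) x = e.
Proof. by case: groupG. Qed.
Lemma grp_mulgV x : mul x (inv x) = e.
Proof. by case: groupG. Qed.

Lemma grp_inv_uniq x y : mul x y = e -> x = inv y.
Proof. by move=> xy1; rewrite -[x]grp_mulg1 -(grp_mulgV y) grp_mulA xy1 grp_mul1g. Qed.

Lemma grp_invgK x : inv (inv x) = x.
Proof. by symmetry; apply: grp_inv_uniq; rewrite grp_mulgV. Qed.

Lemma grp_invg1 : inv e = e.
Proof. by rewrite -[inv e]grp_mulg1 grp_mulVg. Qed.

Lemma grp_invMg x y : inv (mul x y) = mul (inv y) (inv x).
Proof.
symmetry; apply: grp_inv_uniq.
by rewrite -grp_mulA (grp_mulA (inv x)) grp_mulVg grp_mul1g grp_mulVg.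
Qed.

Lemma grp_mul_eqVl x y z : mul x y = z <-> y = mul (inv x) z.
Proof.
by split=> [<- | ->]; rewrite grp_mulA ?grp_mulVg ?grp_mulgV grp_mul1g.
Qed.

Lemma grp_mul_eqVr x y z : mul x y = z <-> x = mul z (inv y).
Proof.
by split=> [<- | ->]; rewrite -grp_mulA ?grp_mulVg ?grp_mulgV grp_mulg1.
Qed.

End Group.

Section PartialAction.
Variables (d : Order.disp_t) (B : cbDistrLatticeType d).
Variables (G : Type) (mul : G -> G -> G) (inv : G -> G) (e : G).
Hypothesis groupG : is_group mul inv e.
Variables (I : G -> B -> Prop) (phi : G -> B -> B).
Hypothesis actP : is_partial_action mul inv e (fun _ => True) I phi.

Local Open Scope order_scope.

Lemma dom_bot g : I g \bot.
Proof. by case: actP => /(_ g) []. Qed.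

Lemma dom_meetl g U V : I g U -> I g (U `&` V).
Proof. by case: actP => /(_ g) [_ _ _ dom_meet] _ _ _ _ /dom_meet; apply. Qed.

Lemma dom_meetr g U V : I g V -> I g (U `&` V).
Proof. by rewrite meetC; apply: dom_meetl. Qed.

Lemma dom_le g U V : U <= V -> I g V -> I g U.
Proof. by move/meet_idPl => <- /dom_meetr; apply. Qed.

Lemma dom_e U : I e U.
Proof. by case: actP => _ [domE _] _ _ _; apply/domE. Qed.

Lemma phi_e U : phi e U = U.
Proof. by case: actP => _ [_ phiE] _ _ _; apply: phiE. Qed.

Lemma phi_dom t U : I (inv t) U -> I t (phi t U).
Proof. by case: actP => _ _ /(_ t) []; auto. Qed.

Lemma phiV_dom g U : I g U -> I (inv g) (phi (inv g) U).
Proof. by move=> gU; apply: phi_dom; rewrite (grp_invgK groupG). Qed.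

Lemma phi_meet t U V :
  I (inv t) U -> I (inv t) V -> phi t (U `&` V) = phi t U `&` phi t V.
Proof. by case: actP => _ _ /(_ t) []; auto. Qed.

Lemma phi_join t U V :
  I (inv t) U -> I (inv t) V -> phi t (U `|` V) = phi t U `|` phi t V.
Proof. by case: actP => _ _ /(_ t) []; auto. Qed.

Lemma phi_comp s t U :
  I (inv t) U -> I (inv s) (phi t U) -> phi s (phi t U) = phi (mul s t) U.
Proof. by case: actP => _ _ _ _; apply. Qed.

Lemma phi_dom_mul s t U : I (inv s) U -> I t U -> I (mul s t) (phi s U).
Proof.
case: actP => _ _ _ domM _ sU tU.
by have [] := proj2 (domM s t (phi s U)); first by exists U.
Qed.

Lemma phiK g U : I (inv g) U -> phi (inv g) (phi g U) = U.
Proof.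
move=> gU; rewrite phi_comp ?(grp_mulVg groupG) ?phi_e ?(grp_invgK groupG) //.
exact: phi_dom.
Qed.

Lemma phiVK g U : I g U -> phi g (phi (inv g) U) = U.
Proof. by move=> gU; rewrite -{1}[g](grp_invgK groupG) phiK ?(grp_invgK groupG). Qed.

Lemma phi_le t U V : I (inv t) V -> U <= V -> phi t U <= phi t V.
Proof.
move=> tV /meet_idPl UV; apply/meet_idPl.
by rewrite -phi_meet ?UV // -UV; apply: dom_meetr.
Qed.

Lemma phi_bot t : phi t \bot = \bot.
Proof.
case: actP => _ _ /(_ t) [_ phi_onto _ phiM _] _ _.
have [U tU phiU0] := phi_onto _ (dom_bot t).
by rewrite -{1}(meet0x U) phiM ?phiU0 ?meetx0 //; apply: dom_bot.
Qed.

(* (P delta_g)(Q delta_h) = (tmeet g P Q) delta_(gh) *)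
Definition tmeet (g : G) (P Q : B) : B := phi g (phi (inv g) P `&` Q).

Lemma tmeet1 P Q : tmeet e P Q = P `&` Q.
Proof. by rewrite /tmeet (grp_invg1 groupG) !phi_e. Qed.

Lemma tmeet_dom g h P Q : I g P -> I h Q -> I (mul g h) (tmeet g P Q).
Proof.
by move=> gP hQ; apply: phi_dom_mul; [apply/dom_meetl/phiV_dom | apply: dom_meetr].
Qed.

Lemma tmeet_le g P Q : I g P -> tmeet g P Q <= P.
Proof.
move=> gP; rewrite /tmeet -{2}(phiVK gP).
by apply: phi_le; [apply: phiV_dom | apply: leIl].
Qed.

Lemma tmeet_meetl g P P' Q :
  I g P -> I g P' -> tmeet g (P `&` P') Q = P' `&` tmeet g P Q.
Proof.
move=> gP gP'; have [gP1 gP1'] := (phiV_dom gP, phiV_dom gP').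
rewrite /tmeet (@phi_meet (inv g) P) ?(grp_invgK groupG) // (meetC (phi _ P)).
by rewrite -meetA phi_meet ?phiVK //; apply: dom_meetl.
Qed.

Lemma tmeet_meetr g P U V :
  I g P -> tmeet g P (U `&` V) = tmeet g P U `&` tmeet g P V.
Proof.
move=> /phiV_dom/dom_meetl gP.
by rewrite /tmeet -phi_meet // meetACA meetxx.
Qed.

Lemma tmeet_joinr g P U V :
  I g P -> tmeet g P (U `|` V) = tmeet g P U `|` tmeet g P V.
Proof.
by move=> /phiV_dom/dom_meetl gP; rewrite /tmeet -phi_join // meetUr.
Qed.

Lemma tmeet_bot g P : tmeet g P \bot = \bot.
Proof. by rewrite /tmeet meetx0 phi_bot. Qed.

Lemma tmeetA g h P Q S : I g P -> I h Q ->
  tmeet (mul g h) (tmeet g P Q) S = tmeet g P (tmeet h Q S).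
Proof.
move=> gP hQ; rewrite /tmeet; set Y := phi (inv g) P `&` Q.
have gY : I (inv g) Y by apply/dom_meetl/phiV_dom.
have hY : I h Y by apply: dom_meetr.
have hY1 : I (inv h) (phi (inv h) Y) by apply: phiV_dom.
have hQ1 : I (inv h) (phi (inv h) Q) by apply: phiV_dom.
have -> : phi (inv (mul g h)) (phi g Y) = phi (inv h) Y.
  rewrite (grp_invMg groupG) // -(@phi_comp (inv h) (inv g)) ?phiK // (grp_invgK groupG) //.
  exact: phi_dom.
set Z := phi (inv h) Y `&` S.
have hZ : I (inv h) Z by apply: dom_meetl.
have gZ : I (inv g) (phi h Z).
  apply: dom_le gY; rewrite -[X in _ <= X](phiVK hY); exact: phi_le (leIl _ _).
rewrite -(@phi_comp g h) //; congr (phi g _).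
have YQ : phi (inv h) Y <= phi (inv h) Q by apply: phi_le; rewrite ?(grp_invgK groupG) ?leIr.
have -> : Z = phi (inv h) Y `&` (phi (inv h) Q `&` S).
  by rewrite /Z meetA (meet_idPl YQ).
have hQS : I (inv h) (phi (inv h) Q `&` S) by apply: dom_meetl.
rewrite phi_meet // phiVK //.
have QS : phi h (phi (inv h) Q `&` S) <= Q.
  by rewrite -[X in _ <= X](phiVK hQ); apply: phi_le (leIl _ _).
by rewrite /Y -meetA (meet_idPr QS).
Qed.

Lemma stone_point_le (xi : B -> bool) U V : stone_point xi -> U <= V -> xi U -> xi V.
Proof. by case=> xiM _ _ _ /meet_idPl <-; rewrite xiM => /andP[]. Qed.

Lemma stone_point_tmeet (xi : B -> bool) g P :
  stone_point xi -> I g P -> (exists Q, xi (tmeet g P Q)) ->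
  stone_point (fun Q => xi (tmeet g P Q)).
Proof.
case=> xiM xiJ xi0 _ gP nz; split=> // [U V | U V |] /=.
- by rewrite tmeet_meetr.
- by rewrite tmeet_joinr.
- by rewrite tmeet_bot.
Qed.

(* For P, P' with xi P and xi P', tmeet g (P `&` P') Q is both P' `&` tmeet g P Q
   and P `&` tmeet g P' Q, so xi (tmeet g P Q) does not depend on such P. *)
Lemma stone_point_tmeet_factor (xi : B -> bool) g Q : stone_point xi ->
  exists b, forall P, I g P -> xi (tmeet g P Q) = xi P && b.
Proof.
move=> xiP; have [xiM _ _ _] := xiP.
have xi_tmeet_le P : I g P -> xi (tmeet g P Q) -> xi P.
  by move=> gP; apply: stone_point_le (tmeet_le Q gP).
have [[P0 [gP0 xiP0]] | no_P0] := pselect (exists P, I g P /\ xi P); last first.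
  exists false => P gP; rewrite andbF.
  by apply/negP => /(xi_tmeet_le _ gP) xiP'; apply: no_P0; exists P.
exists (xi (tmeet g P0 Q)) => P gP.
have [xiP' | xiP'] /= := boolP (xi P); last first.
  by apply/negP => /(xi_tmeet_le _ gP); apply/negP.
have := congr1 xi (tmeet_meetl Q gP gP0).
by rewrite meetC tmeet_meetl // !xiM xiP' xiP0.
Qed.

End PartialAction.

Section CrossedProduct.
Variables (d : Order.disp_t) (B : cbDistrLatticeType d).
Variables (G : Type) (mul : G -> G -> G) (inv : G -> G) (e : G).
Hypothesis groupG : is_group mul inv e.
Variables (R : comPzRingType) (I : G -> B -> Prop) (phi : G -> B -> B).
Hypothesis actP : is_partial_action mul inv e (fun _ => True) I phi.

Local Notation cpelt := (cpelt B G R).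
Local Notation cterm := (cterm B G R).
Local Notation cmul := (cp_mul mul inv phi).
Local Notation term := (cp_mul_term mul inv phi).
Local Notation wf := (cp_wf I).
Local Notation tmeet := (tmeet inv phi).
Local Open Scope ring_scope.

Lemma cp_eval_cat (x y : cpelt) h xi :
  cp_eval (x ++ y) h xi = cp_eval x h xi + cp_eval y h xi.
Proof. by rewrite /cp_eval big_cat. Qed.

Lemma cp_eval_flatten (T : Type) (L : seq T) (f : T -> cpelt) h xi :
  cp_eval (flatten (map f L)) h xi = \sum_(l <- L) cp_eval (f l) h xi.
Proof. by rewrite /cp_eval big_flatten big_map. Qed.

Lemma cp_eval_scale r (x : cpelt) h xi :
  cp_eval (cp_scale r x) h xi = r * cp_eval x h xi.
Proof.
rewrite /cp_eval /cp_scale big_map mulr_sumr; apply: eq_bigr => t _ /=.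
by case: asboolP => _; rewrite ?mulr0 ?mulrA.
Qed.

Lemma cp_eval_false (x : cpelt) h (xi : B -> bool) :
  (forall Q, xi Q = false) -> cp_eval x h xi = 0.
Proof. by move=> xi0; rewrite /cp_eval big1 // => t _; rewrite xi0 mulr0; case: asboolP. Qed.

Lemma cp_eval_mul (x y : cpelt) h xi :
  cp_eval (cmul x y) h xi = \sum_(t <- x) \sum_(u <- y) cp_eval [:: term t u] h xi.
Proof.
rewrite /cp_eval big_allpairs_dep; apply: eq_bigr => t _.
by apply: eq_bigr => u _; rewrite big_seq1.
Qed.

Lemma cp_mul_flattenl (T : Type) (L : seq T) (f : T -> cpelt) z :
  cmul (flatten (map f L)) z = flatten [seq cmul (f l) z | l <- L].
Proof. by elim: L => //= l L <-; rewrite /cp_mul allpairs_cat. Qed.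

Lemma cp_eval_mul_flattenr (T : Type) (L : seq T) (f : T -> cpelt) z h xi :
  cp_eval (cmul z (flatten (map f L))) h xi = \sum_(l <- L) cp_eval (cmul z (f l)) h xi.
Proof.
rewrite cp_eval_mul; under eq_bigr do rewrite big_flatten big_map.
by rewrite exchange_big; apply: eq_bigr => l _; rewrite cp_eval_mul.
Qed.

Lemma cp_scale_mull r (x y : cpelt) : cp_scale r (cmul x y) = cmul (cp_scale r x) y.
Proof.
elim: x => [|t x IHx] //.
rewrite [cp_scale r (t :: x)]/= /cp_mul !allpairs_cons {1}/cp_scale map_cat.
congr (_ ++ _); last exact: IHx.
by rewrite -map_comp; apply: eq_map => u; rewrite /cp_mul_term /= mulrA.
Qed.

Lemma cp_mul_delta_e U g : cmul (delta R U e) (delta R U g) = delta R U g.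
Proof.
rewrite /cp_mul /= /cp_mul_term /= -/(tmeet e U U) (tmeet1 groupG actP).
by rewrite meetxx mulr1 (grp_mul1g groupG).
Qed.

Lemma wf_cat (x y : cpelt) : wf x -> wf y -> wf (x ++ y).
Proof. by move=> wfx wfy t /(List.in_app_or x y t)[/wfx | /wfy]. Qed.

Lemma wf_flatten (T : Type) (L : seq T) (f : T -> cpelt) :
  (forall l, List.In l L -> wf (f l)) -> wf (flatten (map f L)).
Proof.
elim: L => [|l L IHL] wf_f //=; apply: wf_cat; first by apply: wf_f; left.
by apply: IHL => l' Ll'; apply: wf_f; right.
Qed.

Lemma wf_delta U g : I g U -> wf (delta R U g).
Proof. by move=> gU t [<- | []]. Qed.

Lemma wf_delta_e U : wf (delta R U e).
Proof. exact/wf_delta/(dom_e actP). Qed.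

Lemma wf_scale r (x : cpelt) : wf x -> wf (cp_scale r x).
Proof. by move=> wfx t /List.in_map_iff[u [<- /wfx]]. Qed.

Lemma wf_mul (x y : cpelt) : wf x -> wf y -> wf (cmul x y).
Proof.
elim: x => [|t x IHx] wftx wfy //; rewrite /cp_mul allpairs_cons.
apply: wf_cat; last by apply: IHx => // u xu; apply: wftx; right.
move=> _ /List.in_map_iff[u [<- /wfy yu]].
by apply: (tmeet_dom groupG actP) => //; apply: wftx; left.
Qed.

Lemma cp_mul_termA (t u v : cterm) : I t.2 t.1.2 -> I u.2 u.1.2 ->
  term (term t u) v = term t (term u v).
Proof.
case: t u v => [[r P] g] [[s Q] h] [[q S] k] /= gP hQ.
by rewrite /cp_mul_term /= mulrA (grp_mulA groupG) -!/(tmeet _ _ _) (tmeetA groupG actP).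
Qed.

Lemma cp_mulA (x y z : cpelt) : wf x -> wf y ->
  cp_eq (cmul (cmul x y) z) (cmul x (cmul y z)).
Proof.
move=> wfx wfy h xi _; rewrite cp_eval_mul {1}/cp_mul big_allpairs_dep cp_eval_mul.
apply: eq_big_In => t xt; rewrite /cp_mul big_allpairs_dep.
apply: eq_big_In => u yu; apply: eq_bigr => v _.
by rewrite cp_mul_termA //; [apply: wfx | apply: wfy].
Qed.

Lemma cp_eval_mul_terml (t : cterm) (x : cpelt) h xi :
  \sum_(u <- x) cp_eval [:: term t u] h xi =
  t.1.1 * cp_eval x (mul (inv t.2) h) (fun Q => xi (tmeet t.2 t.1.2 Q)).
Proof.
rewrite /cp_eval mulr_sumr; apply: eq_bigr => -[[s Q] k] _; rewrite big_seq1.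
case: t => [[r P] g] /=; rewrite /cp_mul_term /=.
have gkh := grp_mul_eqVl groupG g k h.
case: asboolP => [/gkh kE | gkh']; case: asboolP => kE'.
- by rewrite mulrA.
- by case: kE'.
- by case: gkh'; apply/gkh.
- by rewrite !mulr0.
Qed.

(* Left multiplication by P delta_g pulls a Stone point back along tmeet g P,
   which gives again a Stone point unless it vanishes identically. *)
Lemma cp_eq_mull (z x x' : cpelt) : wf z -> cp_eq x x' -> cp_eq (cmul z x) (cmul z x').
Proof.
move=> wfz xx' h xi xiP; rewrite !cp_eval_mul; apply: eq_big_In => t zt.
rewrite !cp_eval_mul_terml.
have [nz | z0] := pselect (exists Q, xi (tmeet t.2 t.1.2 Q)).
  by rewrite xx' //; apply: (stone_point_tmeet groupG actP) => //; apply: wfz.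
by rewrite !cp_eval_false // => Q; apply/negP => xiQ; apply: z0; exists Q.
Qed.

Lemma cp_eval_mul_termr (x : cpelt) (u : cterm) h (xi : B -> bool) (b : bool) :
  wf x ->
  (forall P, I (mul h (inv u.2)) P -> xi (tmeet (mul h (inv u.2)) P u.1.2) = xi P && b) ->
  \sum_(t <- x) cp_eval [:: term t u] h xi = u.1.1 * b%:R * cp_eval x (mul h (inv u.2)) xi.
Proof.
case: u => [[s Q] k] /= wfx xi_tmeet; rewrite /cp_eval mulr_sumr.
apply: eq_big_In => -[[r P] g] /wfx /= gP; rewrite big_seq1 /cp_mul_term /=.
have gkh := grp_mul_eqVr groupG g k h.
case: asboolP => [/gkh gE | ghk]; case: asboolP => gE'.
- subst g; rewrite -/(tmeet _ P Q) xi_tmeet //.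
  by case: (xi P); case: (b); rewrite /= ?(mulr1, mulr0, mul0r) // mulrC.
- by case: gE'.
- by case: ghk; apply/gkh.
- by rewrite !mulr0.
Qed.

Lemma cp_eq_mulr (x x' z : cpelt) : wf x -> wf x' -> cp_eq x x' ->
  cp_eq (cmul x z) (cmul x' z).
Proof.
move=> wfx wfx' xx' h xi xiP; rewrite !cp_eval_mul exchange_big [RHS]exchange_big.
apply: eq_bigr => u _.
have [b xi_tmeet] := stone_point_tmeet_factor groupG actP (mul h (inv u.2)) u.1.2 xiP.
by rewrite (cp_eval_mul_termr wfx xi_tmeet) (cp_eval_mul_termr wfx' xi_tmeet) xx'.
Qed.

Section DeltaIdeal.
Variable C : B -> Prop.

Definition sandwich_sum (L : seq (cpelt * B * cpelt)) : cpelt :=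
  flatten [seq cmul (cmul l.1.1 (delta R l.1.2 e)) l.2 | l <- L].

Definition sandwiches_in (L : seq (cpelt * B * cpelt)) : Prop :=
  forall l, List.In l L -> [/\ wf l.1.1, C l.1.2 & wf l.2].

Definition delta_ideal (x : cpelt) : Prop :=
  wf x /\ exists2 L, sandwiches_in L & cp_eq x (sandwich_sum L).

Lemma wf_sandwich_sum L : sandwiches_in L -> wf (sandwich_sum L).
Proof.
move=> sandL; apply: wf_flatten => l /sandL[wfa _ wfb].
by do 2!apply: wf_mul => //; apply: wf_delta_e.
Qed.

Lemma delta_ideal_add x y : delta_ideal x -> delta_ideal y -> delta_ideal (cp_add x y).
Proof.
move=> [wfx [L sandL xL]] [wfy [L' sandL' yL']]; split; first exact: wf_cat.
exists (L ++ L'); first by move=> l /(List.in_app_or L L' l)[/sandL | /sandL'].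
move=> h xi xiP; rewrite /cp_add /sandwich_sum map_cat flatten_cat !cp_eval_cat.
by rewrite xL ?yL'.
Qed.

Lemma delta_ideal_scale r x : delta_ideal x -> delta_ideal (cp_scale r x).
Proof.
move=> [wfx [L sandL xL]]; split; first exact: wf_scale.
exists [seq (cp_scale r l.1.1, l.1.2, l.2) | l <- L].
  by move=> _ /List.in_map_iff[l [<- /sandL[wfa Cl wfb]]]; split=> //; apply: wf_scale.
move=> h xi xiP; rewrite cp_eval_scale xL // /sandwich_sum !cp_eval_flatten big_map.
by rewrite mulr_sumr; apply: eq_bigr => l _; rewrite -!cp_scale_mull cp_eval_scale.
Qed.

Lemma delta_ideal_mull a x : wf a -> delta_ideal x -> delta_ideal (cmul a x).
Proof.
move=> wfa [wfx [L sandL xL]]; split; first exact: wf_mul.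
exists [seq (cmul a l.1.1, l.1.2, l.2) | l <- L].
  by move=> _ /List.in_map_iff[l [<- /sandL[wfl Cl wfb]]]; split=> //; apply: wf_mul.
move=> h xi xiP; rewrite (cp_eq_mull wfa xL) // cp_eval_mul_flattenr.
rewrite /sandwich_sum cp_eval_flatten big_map; apply: eq_big_In => l /sandL[wfl _ _] /=.
have wfD : wf (delta R l.1.2 e) by apply: wf_delta_e.
have wfal : wf (cmul a l.1.1) by apply: wf_mul.
rewrite [RHS](cp_mulA _ wfal wfD) // [RHS](cp_mulA _ wfa wfl) //.
by apply: (cp_eq_mull wfa (cp_mulA _ wfl wfD)).
Qed.

Lemma delta_ideal_mulr a x : wf a -> delta_ideal x -> delta_ideal (cmul x a).
Proof.
move=> wfa [wfx [L sandL xL]]; split; first exact: wf_mul.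
exists [seq (l.1.1, l.1.2, cmul l.2 a) | l <- L].
  by move=> _ /List.in_map_iff[l [<- /sandL[wfl Cl wfb]]]; split=> //; apply: wf_mul.
move=> h xi xiP; rewrite (cp_eq_mulr _ wfx (wf_sandwich_sum sandL) xL) //.
rewrite /sandwich_sum cp_mul_flattenl !cp_eval_flatten !big_map.
apply: eq_big_In => l /sandL[wfl _ wfb] /=.
by apply: cp_mulA => //; apply/wf_mul/wf_delta_e.
Qed.

Lemma delta_ideal_two_sided : cp_two_sided_ideal mul inv I phi delta_ideal.
Proof.
split=> //.
- split=> [x [] // | x y [_ [L sandL xL]] wfy xy]; split=> //.
  by exists L => // h xi xiP; rewrite -xy // xL.
- by split=> //; exists [::].
- exact: delta_ideal_add.
- exact: delta_ideal_scale.
- by move=> a x wfa Jx; split; [apply: delta_ideal_mull | apply: delta_ideal_mulr].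
Qed.

Lemma delta_ideal_delta V g : C V -> I g V -> delta_ideal (delta R V g).
Proof.
move=> CV gV; split; first exact: wf_delta.
exists [:: (delta R V e, V, delta R V g)].
  by move=> _ [<- | []]; split=> //; [apply: wf_delta_e | apply: wf_delta].
have -> : sandwich_sum [:: (delta R V e, V, delta R V g)] =
  cmul (cmul (delta R V e) (delta R V e)) (delta R V g) ++ [::] by [].
by rewrite cats0 !cp_mul_delta_e.
Qed.

End DeltaIdeal.

Section SandwichSurjection.
Variables (C : B -> Prop) (U : B) (L : seq (cpelt * B * cpelt)).
Hypotheses (sandL : sandwiches_in C L) (UeL : cp_eq (delta R U e) (sandwich_sum L)).

Local Notation n := (size L).
Local Notation in_left_ideal := (cp_in_left_ideal mul inv e I phi).

Definition sandwich_nth (k : 'I_n) : cpelt * B * cpelt :=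
  nth ([::], Order.bottom, [::]) L k.

Definition sandwich_support (k : 'I_n) : B := (sandwich_nth k).1.2.

Definition sandwich_map (y : 'I_n -> cpelt) : cpelt :=
  flatten [seq cmul (y k) (cmul (sandwich_nth k).2 (delta R U e)) | k <- enum 'I_n].

Lemma sandwich_nthP k :
  [/\ wf (sandwich_nth k).1.1, C (sandwich_nth k).1.2 & wf (sandwich_nth k).2].
Proof. exact/sandL/In_nth. Qed.

Lemma sandwich_map_in_left_ideal y : (forall k, wf (y k)) -> in_left_ideal U (sandwich_map y).
Proof.
move=> wfy; split.
  apply: wf_flatten => k _; have [_ _ wfb] := sandwich_nthP k.
  by do 2!apply: wf_mul => //; apply: wf_delta_e.
exists (flatten [seq cmul (y k) (sandwich_nth k).2 | k <- enum 'I_n]).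
  by apply: wf_flatten => k _; have [_ _ wfb] := sandwich_nthP k; apply: wf_mul.
move=> h xi xiP; rewrite cp_mul_flattenl !cp_eval_flatten; apply: eq_bigr => k _.
by have [_ _ wfb] := sandwich_nthP k; rewrite [RHS](cp_mulA _ (wfy k) wfb).
Qed.

Lemma sandwich_map_eq y y' : (forall k, wf (y k)) -> (forall k, wf (y' k)) ->
  (forall k, cp_eq (y k) (y' k)) -> cp_eq (sandwich_map y) (sandwich_map y').
Proof.
move=> wfy wfy' yy' h xi xiP; rewrite !cp_eval_flatten; apply: eq_bigr => k _.
exact: cp_eq_mulr.
Qed.

Lemma sandwich_map_add y y' :
  cp_eq (sandwich_map (fun k => cp_add (y k) (y' k)))
        (cp_add (sandwich_map y) (sandwich_map y')).
Proof.
move=> h xi _; rewrite /cp_add cp_eval_cat !cp_eval_flatten -big_split.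
by apply: eq_bigr => k _; rewrite /cp_mul allpairs_cat cp_eval_cat.
Qed.

Lemma sandwich_map_mull a y : wf a -> (forall k, wf (y k)) ->
  cp_eq (sandwich_map (fun k => cmul a (y k))) (cmul a (sandwich_map y)).
Proof.
move=> wfa wfy h xi xiP; rewrite cp_eval_flatten cp_eval_mul_flattenr.
by apply: eq_bigr => k _; rewrite (cp_mulA _ wfa (wfy k)).
Qed.

Lemma sandwich_map_onto x : in_left_ideal U x ->
  exists2 y, cp_dsum mul inv e I phi sandwich_support y & cp_eq (sandwich_map y) x.
Proof.
move=> [wfx [a wfa xE]].
pose y k := cmul a (cmul (sandwich_nth k).1.1 (delta R (sandwich_support k) e)).
have wfy k : wf (y k).
  by have [wfl _ _] := sandwich_nthP k; do 2!apply: wf_mul => //; apply: wf_delta_e.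
exists y.
  split; last by exists (enum 'I_n) => k []; apply: In_mem; rewrite mem_enum.
  move=> k; split=> //; have [wfl _ _] := sandwich_nthP k.
  exists (cmul a (sandwich_nth k).1.1); first exact: wf_mul.
  by move=> h xi xiP; rewrite [RHS](cp_mulA _ wfa wfl).
move=> h xi xiP; rewrite xE // -[in RHS]cp_mul_delta_e.
rewrite (cp_eq_mull wfa (cp_eq_mulr _ (@wf_delta_e U) (wf_sandwich_sum sandL) UeL)) //.
rewrite /sandwich_sum cp_mul_flattenl cp_eval_mul_flattenr.
rewrite (big_nth ([::], Order.bottom, [::])) big_mkord.
rewrite /sandwich_map cp_eval_flatten big_enum; apply: eq_bigr => k _.
have [wfl _ wfb] := sandwich_nthP k.
have wflD : wf (cmul (sandwich_nth k).1.1 (delta R (sandwich_support k) e)).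
  by apply: wf_mul => //; apply: wf_delta_e.
by rewrite (cp_mulA _ wfa wflD) // [RHS](cp_eq_mull wfa (cp_mulA _ wflD wfb)).
Qed.

Lemma sandwich_map_surj :
  cp_surj_module_hom mul inv e I phi sandwich_support U sandwich_map.
Proof.
have wf_dsum y : cp_dsum mul inv e I phi sandwich_support y -> forall k, wf (y k).
  by move=> [yI _] k; case: (yI k).
split.
- by move=> y /wf_dsum; apply: sandwich_map_in_left_ideal.
- by move=> y y' /wf_dsum wfy /wf_dsum wfy'; apply: sandwich_map_eq.
- by move=> y y' _ _; apply: sandwich_map_add.
- by move=> a y wfa /wf_dsum; apply: sandwich_map_mull.
- exact: sandwich_map_onto.
Qed.

End SandwichSurjection.

Lemma delta_ideal_surj C U : delta_ideal C (delta R U e) ->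
  exists (J : Type) (Ui : J -> B), (forall i, C (Ui i)) /\
    exists F : (J -> cpelt) -> cpelt, cp_surj_module_hom mul inv e I phi Ui U F.
Proof.
move=> [_ [L sandL UeL]]; exists 'I_(size L), (@sandwich_support L).
split; first by move=> k; have [] := sandwich_nthP sandL k.
by exists (@sandwich_map U L); apply: (sandwich_map_surj sandL UeL).
Qed.

End CrossedProduct.

Unset Implicit Arguments.

Theorem theorem4p13 (d : Order.disp_t) (B : cbDistrLatticeType d)
    (G : Type) (mul : G -> G -> G) (inv : G -> G) (e : G)
    (R : comPzRingType)
    (B1 : B -> Prop) (I1 : G -> B -> Prop) (phi1 : G -> B -> B)
    (I2 : G -> B -> Prop) (phi2 : G -> B -> B) :
  is_group mul inv e ->
  is_partial_subaction mul inv e B1 I1 phi1 (fun _ => True) I2 phi2 ->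
  is_gba_ideal (fun _ => True) B1 ->
  (forall J : cpelt B G R -> Prop,
      cp_two_sided_ideal mul inv I2 phi2 J ->
      (forall g U, I1 g U -> J (delta R U g)) ->
      forall x, cp_wf I2 x -> J x) ->
  forall U : B,
    exists (J : Type) (Ui : J -> B),
      (forall i, B1 (Ui i)) /\
      exists F : (J -> cpelt B G R) -> cpelt B G R,
        cp_surj_module_hom mul inv e I2 phi2 Ui U F.
Proof.
move=> groupG [_ act1 act2 dom12 _] _ A1_full U.
apply: (delta_ideal_surj groupG act2).
apply: (A1_full _ (delta_ideal_two_sided groupG R act2 B1)); last exact: (wf_delta_e act2).
move=> g V gV; apply: (delta_ideal_delta groupG R act2) (dom12 _ _ gV).
by case: act1 => /(_ g) [inB1 _ _ _] _ _ _ _; apply: inB1.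
Qed.
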